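(* Let $A,B$ be real symmetric $n\times n$ matrices with spectral decompositions $A=\sum_i\lambda_iv_iv_i^\top$ and $B=\sum_j\mu_jw_jw_j^\top$, suppose $\|A\|\le2.5$, and let $\eta>0$. Then the matrix $X=\sum_{i,j}\frac{\eta}{(\lambda_i-\mu_j)^2+\eta^2}v_iv_i^\top\mathbf Jw_jw_j^\top$ satisfies $$X=\frac1{2\pi}\operatorname{Re}\oint_\Gamma R_A(z)\mathbf JR_B(z+\mathbf i\eta)\,dz,$$ where $\Gamma$ is the boundary of the rectangle with vertices $\pm3\pm\mathbf i\eta/2$, traversed counterclockwise.
   Context: $\mathbf J$ is the $n\times n$ all-ones matrix, $\|\cdot\|$ the spectral norm, $\mathbf i=\sqrt{-1}$. For a real symmetric matrix $M$ and $z\in\mathbb C$ not an eigenvalue of $M$, $R_M(z)=(M-z\mathbf I)^{-1}$ is the resolvent. The real part and the integral are taken entrywise. *)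

From HB Require Import structures.
From mathcomp Require Import all_boot all_order all_algebra.
From mathcomp Require Import all_classical all_reals all_analysis.
From mathcomp Require Import complex.

Set Implicit Arguments.
Unset Strict Implicit.
Unset Printing Implicit Defensive.

Import Order.TTheory GRing.Theory Num.Theory.
Local Open Scope ring_scope.
Local Open Scope classical_set_scope.

Section PilotDefs.
Variable R : realType.
Local Notation C := (R[i]).

Definition onesmx (n : nat) : 'M[R]_n := const_mx 1.

Definition vnorm2 (n : nat) (x : 'cV[R]_n) : R :=
  Num.sqrt (\sum_(k < n) x k 0 ^+ 2).

Definition spnorm (n : nat) (A : 'M[R]_n) : R :=
  sup [set vnorm2 (A *m x) | x in [set x : 'cV[R]_n | vnorm2 x = 1]].

Definition cmx (n : nat) (A : 'M[R]_n) : 'M[C]_n := map_mx (fun r => Complex r 0) A.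

Definition resolvent (n : nat) (M : 'M[R]_n) (z : C) : 'M[C]_n :=
  invmx (cmx M - z%:M).

Definition cintegral01 (f : R -> C) : C :=
  Complex (\int[@lebesgue_measure R]_(t in `[0, 1]) complex.Re (f t))
          (\int[@lebesgue_measure R]_(t in `[0, 1]) complex.Im (f t)).

Definition seg_integral (n : nat) (F : C -> 'M[C]_n) (a b : C) : 'M[C]_n :=
  \matrix_(i < n, j < n) cintegral01 (fun t => F (a + Complex t 0 * (b - a)) i j * (b - a)).

Definition rect_integral (n : nat) (F : C -> 'M[C]_n) (x0 y0 : R) : 'M[C]_n :=
  let v1 := Complex x0 (- y0) in
  let v2 := Complex x0 y0 in
  let v3 := Complex (- x0) y0 in
  let v4 := Complex (- x0) (- y0) in
  seg_integral F v1 v2 + seg_integral F v2 v3 +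
  seg_integral F v3 v4 + seg_integral F v4 v1.

End PilotDefs.

(* The resolvents diagonalise in the eigenbases, so each entry of
   R_A(z) J R_B(z + i eta) is a sum of terms K / ((lam_i - z) (q_j - z)) with
   q_j = mu_j - i eta, i.e. by partial fractions a combination of Cauchy kernels
   1 / (p - z).  On a segment the kernel has the explicit primitive
   -log|p - z| - i arg(p - z), where a branch of arg is written with atan, so its
   integral around the rectangle is computed in closed form: -2 pi i for the
   eigenvalues lam_i, which lie inside because |lam_i| <= ||A|| < 3, and 0 for the
   poles q_j, which lie below it.  Taking real parts leaves
   Im (q_j - lam_i)^-1 = eta / ((lam_i - mu_j)^2 + eta^2), times 2 pi. *)

From HB Require Import structures.
From mathcomp Require Import all_boot all_order all_algebra.
From mathcomp Require Import all_classical all_reals all_analysis.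
From mathcomp Require Import complex.
From mathcomp Require Import ring lra.

Set Implicit Arguments.
Unset Strict Implicit.
Unset Printing Implicit Defensive.

Import Order.TTheory GRing.Theory Num.Theory.
Import numFieldNormedType.Exports.
Local Open Scope ring_scope.
Local Open Scope classical_set_scope.

Section RealPrimitives.
Variable R : realType.
Local Notation mu := (@lebesgue_measure R).
Implicit Types (f G : R -> R) (a b t : R).

Lemma is_derive_eqr f t a b : is_derive t 1 f a -> a = b -> is_derive t 1 f b.
Proof. by move=> ? <-. Qed.

Lemma Rintegral_FTC f G a b : a < b -> {within `[a, b], continuous f} ->
  (forall t, a <= t <= b -> is_derive t 1 G (f t)) ->
  \int[mu]_(t in `[a, b]) f t = G b - G a.
Proof.
move=> ab cf dG.
have cG t : a <= t <= b -> {for t, continuous G}.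
  by move=> /dG [dGt _]; apply/differentiable_continuous/derivable1_diffP.
rewrite /Rintegral (@continuous_FTC2 _ f G a b ab cf) //=.
- split.
  + by move=> t; rewrite in_itv /= => /andP[ta tb]; case: (dG t); rewrite ?ltW.
  + by apply/cvg_at_right_filter/cG; rewrite lexx ltW.
  + by apply/cvg_at_left_filter/cG; rewrite lexx ltW.
- move=> t; rewrite in_itv /= => /andP[ta tb].
  by case: (dG t) => [|_ <-]; rewrite ?ltW // derive1E.
Qed.

Lemma is_derive_affine (x0 dx t : R) : is_derive t 1 (fun s => x0 - s * dx) (- dx).
Proof.
apply: is_derive_eqr (is_deriveB (is_derive_cst x0 t 1)
  (is_deriveM (is_derive_id t 1) (is_derive_cst dx t 1))) _.
by rewrite /GRing.scale /=; ring.
Qed.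

Lemma derivable_within_continuous_cc f a b :
  (forall t, a <= t <= b -> derivable f t 1) -> {within `[a, b], continuous f}.
Proof.
move=> df; apply: derivable_within_continuous => t.
by rewrite in_itv /= => /df.
Qed.

Lemma atanV (x : R) : 0 < x -> atan x^-1 = pi / 2 - atan x.
Proof.
move=> x0; have /andP[at0 atpi2] : 0 < atan x < pi / 2.
  by rewrite atan_ltpi2 andbT -atan0 lt_atan.
have cos_gt0 : 0 < cos (atan x).
  by apply: cos_gt0_pihalf; rewrite atan_gtNpi2 atan_ltpi2.
have sinE : sin (atan x) = x * cos (atan x).
  by have := atanK x; rewrite /tan => {2}<-; rewrite mulrVK // unitfE gt_eqF.
have mem : pi / 2 - atan x \in (`](- (pi / 2)), (pi / 2)[%R : interval R).
  by rewrite in_itv /=; apply/andP; split; lra.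
rewrite -[RHS](tanK mem) /tan -[pi / 2 - _]opprB sinN cosN sinBpihalf cosBpihalf.
by rewrite opprK sinE; congr atan; field; rewrite !gt_eqF.
Qed.

Section DerivativesOfPlaneCurves.
Variables (u v : R -> R) (du dv t : R).
Hypotheses (hu : is_derive t 1 u du) (hv : is_derive t 1 v dv).

Let is_derive_sqr_sum :
  is_derive t 1 (fun s => u s ^+ 2 + v s ^+ 2) (2 * (u t * du + v t * dv)).
Proof.
apply: is_derive_eqr (is_deriveD (is_deriveM hu hu) (is_deriveM hv hv)) _.
by rewrite /GRing.scale /=; ring.
Qed.

Lemma is_derive_half_ln_sqr_sum : 0 < u t ^+ 2 + v t ^+ 2 ->
  is_derive t 1 (fun s => ln (u s ^+ 2 + v s ^+ 2) / 2)
    ((u t * du + v t * dv) / (u t ^+ 2 + v t ^+ 2)).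
Proof.
move=> N0; have dln := is_derive1_comp (g := fun s => u s ^+ 2 + v s ^+ 2)
  (is_derive1_ln N0) is_derive_sqr_sum.
refine (is_derive_eqr (is_deriveM dln (is_derive_cst (2^-1 : R) t 1)) _).
by rewrite /GRing.scale /=; field; rewrite gt_eqF.
Qed.

Lemma is_derive_atan_div : v t != 0 ->
  is_derive t 1 (fun s => atan (u s / v s))
    ((du * v t - u t * dv) / (u t ^+ 2 + v t ^+ 2)).
Proof.
move=> v0; have dq := is_deriveM hu (is_deriveV v0 hv).
apply: is_derive_eqr (is_derive1_comp (g := fun s => u s / v s)
  (is_derive1_atan _) dq) _.
have N0 : u t ^+ 2 + v t ^+ 2 != 0.
  by rewrite gt_eqF // ltr_wpDl ?sqr_ge0 // exprn_even_gt0 //= v0.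
by rewrite /GRing.scale /=; field; rewrite N0 v0.
Qed.

Lemma derivable_lin_div_sqr_sum (c1 c2 : R) : u t ^+ 2 + v t ^+ 2 != 0 ->
  derivable (fun s => (u s * c1 + v s * c2) / (u s ^+ 2 + v s ^+ 2)) t 1.
Proof.
move=> N0; have dl := is_deriveD (is_deriveM hu (is_derive_cst c1 t 1))
  (is_deriveM hv (is_derive_cst c2 t 1)).
by case: (is_deriveM dl
  (is_deriveV (f := fun s => u s ^+ 2 + v s ^+ 2) N0 is_derive_sqr_sum)).
Qed.

End DerivativesOfPlaneCurves.

End RealPrimitives.

Section ComplexIntegral01.
Variable R : realType.
Local Notation C := R[i].
Local Notation mu := (@lebesgue_measure R).
Implicit Types (g h : R -> C).

Lemma complexM (a b c d : R) :
  (Complex a b * Complex c d : C) = Complex (a * c - b * d) (a * d + b * c).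
Proof. by []. Qed.

Definition cintegrable01 g : Prop :=
  mu.-integrable `[0, 1] (EFin \o (fun t => complex.Re (g t))) /\
  mu.-integrable `[0, 1] (EFin \o (fun t => complex.Im (g t))).

Lemma eq_cintegral01 g h : (forall t, 0 <= t <= 1 -> g t = h t) ->
  cintegral01 g = cintegral01 h.
Proof.
move=> gh; rewrite /cintegral01.
by congr Complex; apply: eq_Rintegral => t; rewrite inE /= in_itv /= => /gh ->.
Qed.

Lemma cintegrable01D g h : cintegrable01 g -> cintegrable01 h ->
  cintegrable01 (fun t => g t + h t).
Proof.
move=> [gr gi] [hr hi]; split.
  by apply: eq_integrable (integrableD _ gr hr) => // t _ /=; case: (g t); case: (h t).
by apply: eq_integrable (integrableD _ gi hi) => // t _ /=; case: (g t); case: (h t).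
Qed.

Lemma cintegrable01B g h : cintegrable01 g -> cintegrable01 h ->
  cintegrable01 (fun t => g t - h t).
Proof.
move=> [gr gi] [hr hi]; split.
  by apply: eq_integrable (integrableB _ gr hr) => // t _ /=; case: (g t); case: (h t).
by apply: eq_integrable (integrableB _ gi hi) => // t _ /=; case: (g t); case: (h t).
Qed.

Lemma cintegrable01Zl k g : cintegrable01 g -> cintegrable01 (fun t => k * g t).
Proof.
case: k => k1 k2 [gr gi]; split.
  apply: eq_integrable (integrableB _ (integrableZl _ k1 gr) (integrableZl _ k2 gi)) => //.
  by move=> t _ /=; case: (g t).
apply: eq_integrable (integrableD _ (integrableZl _ k1 gi) (integrableZl _ k2 gr)) => //.
by move=> t _ /=; case: (g t).
Qed.

Lemma cintegrable01_sum (I : Type) (s : seq I) (g : I -> R -> C) :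
  (forall i, cintegrable01 (g i)) ->
  cintegrable01 (fun t => \sum_(i <- s) g i t).
Proof.
move=> gi; elim: s => [|i s IH].
  by split; apply: eq_integrable (integrable0 _ _) => // t _ /=; rewrite big_nil.
have [hr hi] := cintegrable01D (gi i) IH.
by split; [apply: eq_integrable hr|apply: eq_integrable hi] => // t _ /=;
  rewrite big_cons.
Qed.

Lemma cintegral01D g h : cintegrable01 g -> cintegrable01 h ->
  cintegral01 (fun t => g t + h t) = cintegral01 g + cintegral01 h.
Proof.
move=> [gr gi] [hr hi]; rewrite /cintegral01 /=.
by congr Complex; rewrite -RintegralD //; apply: eq_Rintegral => t _;
  case: (g t); case: (h t).
Qed.

Lemma cintegral01B g h : cintegrable01 g -> cintegrable01 h ->
  cintegral01 (fun t => g t - h t) = cintegral01 g - cintegral01 h.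
Proof.
move=> [gr gi] [hr hi]; rewrite /cintegral01 /=.
by congr Complex; rewrite -RintegralB //; apply: eq_Rintegral => t _;
  case: (g t); case: (h t).
Qed.

Lemma cintegral01Zl k g : cintegrable01 g ->
  cintegral01 (fun t => k * g t) = k * cintegral01 g.
Proof.
case: k => k1 k2 [gr gi]; rewrite /cintegral01 complexM.
have ReM x : complex.Re (Complex k1 k2 * x) = k1 * complex.Re x - k2 * complex.Im x.
  by case: x.
have ImM x : complex.Im (Complex k1 k2 * x) = k1 * complex.Im x + k2 * complex.Re x.
  by case: x.
under eq_Rintegral do rewrite ReM; under [X in Complex _ X]eq_Rintegral do rewrite ImM.
by rewrite RintegralB ?RintegralD ?RintegralZl //;
  [apply: eq_integrable (integrableZl _ k1 gi)|apply: eq_integrable (integrableZl _ k2 gr)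
  |apply: eq_integrable (integrableZl _ k1 gr)|apply: eq_integrable (integrableZl _ k2 gi)].
Qed.

Lemma cintegral01_sum (I : Type) (s : seq I) (g : I -> R -> C) :
  (forall i, cintegrable01 (g i)) ->
  cintegral01 (fun t => \sum_(i <- s) g i t) = \sum_(i <- s) cintegral01 (g i).
Proof.
move=> gi; elim: s => [|i s IH].
  rewrite big_nil (@eq_cintegral01 _ (fun _ => 0)) => [|t _]; last by rewrite big_nil.
  by rewrite /cintegral01 /= Rintegral_cst // mul0r.
under eq_cintegral01 do rewrite big_cons.
by rewrite cintegral01D ?IH ?big_cons //; apply: cintegrable01_sum.
Qed.

End ComplexIntegral01.

Section CauchyKernelOnSegment.
Variable R : realType.
Local Notation C := R[i].
Local Notation Re := (@complex.Re R).
Local Notation Im := (@complex.Im R).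

Definition segment (a b : C) (t : R) : C := a + Complex t 0 * (b - a).

Definition line_integral (f : C -> C) (a b : C) : C :=
  cintegral01 (fun t => f (segment a b t) * (b - a)).

Definition log_modulus (w : C) : R := ln (Re w ^+ 2 + Im w ^+ 2) / 2.

Lemma segment0 a b : segment a b 0 = a.
Proof. by rewrite /segment mul0r addr0. Qed.

Lemma segment1 a b : segment a b 1 = b.
Proof. by rewrite /segment mul1r addrC subrK. Qed.

Lemma Re_sub_segment p a b t :
  Re (p - segment a b t) = Re (p - a) - t * Re (b - a).
Proof. by case: p a b => [? ?] [? ?] [? ?] /=; ring. Qed.

Lemma Im_sub_segment p a b t :
  Im (p - segment a b t) = Im (p - a) - t * Im (b - a).
Proof. by case: p a b => [? ?] [? ?] [? ?] /=; ring. Qed.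

Lemma invC_mulE (w d : C) : w^-1 * d =
  Complex ((Re w * Re d + Im w * Im d) / (Re w ^+ 2 + Im w ^+ 2))
          ((Re w * Im d - Im w * Re d) / (Re w ^+ 2 + Im w ^+ 2)).
Proof. by case: w d => [w1 w2] [d1 d2] /=; congr Complex; ring. Qed.

Section Primitives.
Variables p a b : C.
Local Notation kernel t := ((p - segment a b t)^-1 * (b - a)).

Let is_derive_Re (t : R) : is_derive t 1 (fun s => Re (p - segment a b s)) (- Re (b - a)).
Proof.
rewrite (_ : (fun s => _) = fun s => Re (p - a) - s * Re (b - a)).
  exact: is_derive_affine.
by apply/funext => s; rewrite Re_sub_segment.
Qed.

Let is_derive_Im (t : R) : is_derive t 1 (fun s => Im (p - segment a b s)) (- Im (b - a)).
Proof.
rewrite (_ : (fun s => _) = fun s => Im (p - a) - s * Im (b - a)).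
  exact: is_derive_affine.
by apply/funext => s; rewrite Im_sub_segment.
Qed.

Let sqr_sum_gt0 (t : R) : p != segment a b t ->
  0 < Re (p - segment a b t) ^+ 2 + Im (p - segment a b t) ^+ 2.
Proof.
rewrite -subr_eq0; case: (p - _) => x y /=.
rewrite lt_def paddr_eq0 ?sqr_ge0 // !sqrf_eq0 addr_ge0 ?sqr_ge0 // andbT.
by apply: contra => /andP[/eqP -> /eqP ->].
Qed.

Lemma is_derive_log_modulus_sub_segment (t : R) : p != segment a b t ->
  is_derive t 1 (fun s => - log_modulus (p - segment a b s)) (Re (kernel t)).
Proof.
move=> /sqr_sum_gt0 N0.
refine (is_derive_eqr (is_deriveN
  (is_derive_half_ln_sqr_sum (is_derive_Re t) (is_derive_Im t) N0)) _).
by rewrite invC_mulE /=; ring.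
Qed.

Lemma is_derive_atan_sub_segment_Im (t : R) : Im (p - segment a b t) != 0 ->
  is_derive t 1 (fun s => atan (Re (p - segment a b s) / Im (p - segment a b s)))
    (Im (kernel t)).
Proof.
move=> v0.
refine (is_derive_eqr (is_derive_atan_div (is_derive_Re t) (is_derive_Im t) v0) _).
by rewrite invC_mulE /=; ring.
Qed.

Lemma is_derive_atan_sub_segment_Re (t : R) : Re (p - segment a b t) != 0 ->
  is_derive t 1 (fun s => - atan (Im (p - segment a b s) / Re (p - segment a b s)))
    (Im (kernel t)).
Proof.
move=> u0.
refine (is_derive_eqr (is_deriveN
  (is_derive_atan_div (is_derive_Im t) (is_derive_Re t) u0)) _).
by rewrite invC_mulE /= [Im _ ^+ 2 + _]addrC; ring.
Qed.

Lemma derivable_Re_kernel (t : R) : p != segment a b t ->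
  derivable (fun s => Re (kernel s)) t 1.
Proof.
move=> /sqr_sum_gt0 /lt0r_neq0 N0.
under eq_fun do rewrite invC_mulE /=.
exact: derivable_lin_div_sqr_sum (is_derive_Re t) (is_derive_Im t) _ _ N0.
Qed.

Lemma derivable_Im_kernel (t : R) : p != segment a b t ->
  derivable (fun s => Im (kernel s)) t 1.
Proof.
move=> /sqr_sum_gt0 /lt0r_neq0 N0.
rewrite (_ : (fun s => _) = fun s =>
  (Re (p - segment a b s) * Im (b - a) + Im (p - segment a b s) * - Re (b - a)) /
  (Re (p - segment a b s) ^+ 2 + Im (p - segment a b s) ^+ 2)).
  exact: derivable_lin_div_sqr_sum (is_derive_Re t) (is_derive_Im t) _ _ N0.
by apply/funext => s; rewrite invC_mulE /= mulrN.
Qed.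

End Primitives.

Lemma cintegrable01_cauchy p a b :
  (forall t, 0 <= t <= 1 -> p != segment a b t) ->
  cintegrable01 (fun t => (p - segment a b t)^-1 * (b - a)).
Proof.
move=> pz; split; apply: continuous_compact_integrable;
  try exact: segment_compact; apply: derivable_within_continuous_cc => t /pz.
  exact: derivable_Re_kernel.
exact: derivable_Im_kernel.
Qed.

Lemma Re_line_integral_cauchy p a b :
  (forall t, 0 <= t <= 1 -> p != segment a b t) ->
  Re (line_integral (fun z => (p - z)^-1) a b) = log_modulus (p - a) - log_modulus (p - b).
Proof.
move=> pz; rewrite /line_integral /cintegral01 /=.
have dG (t : R) : 0 <= t <= 1 -> is_derive t 1 (fun s => - log_modulus (p - segment a b s))
    (Re ((p - segment a b t)^-1 * (b - a))).
  by move=> /pz; exact: is_derive_log_modulus_sub_segment.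
rewrite (Rintegral_FTC ltr01 _ dG) /= ?segment0 ?segment1 ?opprK; first by rewrite addrC.
by apply: derivable_within_continuous_cc => t /pz; exact: derivable_Re_kernel.
Qed.

Lemma Im_line_integral_cauchy_Im p a b :
  (forall t, 0 <= t <= 1 -> Im (p - segment a b t) != 0) ->
  Im (line_integral (fun z => (p - z)^-1) a b) =
  atan (Re (p - b) / Im (p - b)) - atan (Re (p - a) / Im (p - a)).
Proof.
move=> v0; have pz t : 0 <= t <= 1 -> p != segment a b t.
  by move=> /v0; apply: contra => /eqP ->; rewrite subrr.
rewrite /line_integral /cintegral01 /=.
have dG (t : R) : 0 <= t <= 1 -> is_derive t 1
    (fun s => atan (Re (p - segment a b s) / Im (p - segment a b s)))
    (Im ((p - segment a b t)^-1 * (b - a))).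
  by move=> /v0; exact: is_derive_atan_sub_segment_Im.
rewrite (Rintegral_FTC ltr01 _ dG) /= ?segment0 ?segment1 //.
by apply: derivable_within_continuous_cc => t /pz; exact: derivable_Im_kernel.
Qed.

Lemma Im_line_integral_cauchy_Re p a b :
  (forall t, 0 <= t <= 1 -> Re (p - segment a b t) != 0) ->
  Im (line_integral (fun z => (p - z)^-1) a b) =
  atan (Im (p - a) / Re (p - a)) - atan (Im (p - b) / Re (p - b)).
Proof.
move=> u0; have pz t : 0 <= t <= 1 -> p != segment a b t.
  by move=> /u0; apply: contra => /eqP ->; rewrite subrr.
rewrite /line_integral /cintegral01 /=.
have dG (t : R) : 0 <= t <= 1 -> is_derive t 1
    (fun s => - atan (Im (p - segment a b s) / Re (p - segment a b s)))
    (Im ((p - segment a b t)^-1 * (b - a))).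
  by move=> /u0; exact: is_derive_atan_sub_segment_Re.
rewrite (Rintegral_FTC ltr01 _ dG) /= ?segment0 ?segment1 ?opprK; first by rewrite addrC.
by apply: derivable_within_continuous_cc => t /pz; exact: derivable_Im_kernel.
Qed.

Lemma line_integral_cauchy_diff_sum (I : Type) (r : seq I) (k p q : I -> C) a b :
  (forall i t, 0 <= t <= 1 -> p i != segment a b t) ->
  (forall i t, 0 <= t <= 1 -> q i != segment a b t) ->
  line_integral (fun z => \sum_(i <- r) k i * ((p i - z)^-1 - (q i - z)^-1)) a b =
  \sum_(i <- r) k i * (line_integral (fun z => (p i - z)^-1) a b -
                       line_integral (fun z => (q i - z)^-1) a b).
Proof.
move=> hp hq; rewrite /line_integral.
have ipq i : cintegrable01 (fun t =>
    (p i - segment a b t)^-1 * (b - a) - (q i - segment a b t)^-1 * (b - a)).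
  exact: cintegrable01B (cintegrable01_cauchy (hp i)) (cintegrable01_cauchy (hq i)).
rewrite (eq_cintegral01 (h := fun t => \sum_(i <- r) k i *
    ((p i - segment a b t)^-1 * (b - a) - (q i - segment a b t)^-1 * (b - a)))).
  rewrite cintegral01_sum => [|i]; last exact: cintegrable01Zl.
  apply: eq_bigr => i _; rewrite (cintegral01Zl _ (ipq i)).
  by rewrite (cintegral01B (cintegrable01_cauchy (hp i)) (cintegrable01_cauchy (hq i))).
by move=> t _; rewrite mulr_suml; apply: eq_bigr => i _; rewrite -mulrA mulrBl.
Qed.

End CauchyKernelOnSegment.

Lemma partial_fraction2 (F : fieldType) (p q z : F) :
  p != z -> q != z -> p != q ->
  (p - z)^-1 * (q - z)^-1 = (q - p)^-1 * ((p - z)^-1 - (q - z)^-1).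
Proof.
move=> pz qz pq; field.
by rewrite !subr_eq0 pz qz eq_sym pq.
Qed.

Section RectangleContour.
Variable R : realType.
Local Notation C := R[i].
Local Notation Re := (@complex.Re R).
Local Notation Im := (@complex.Im R).
Implicit Types (p z : C) (f g : C -> C).

Definition rect_sides (x0 y0 : R) : seq (C * C) :=
  let v1 := Complex x0 (- y0) in let v2 := Complex x0 y0 in
  let v3 := Complex (- x0) y0 in let v4 := Complex (- x0) (- y0) in
  [:: (v1, v2); (v2, v3); (v3, v4); (v4, v1)].

Definition rect_contour_integral f (x0 y0 : R) : C :=
  \sum_(s <- rect_sides x0 y0) line_integral f s.1 s.2.

Lemma rect_integral_entry n (F : C -> 'M[C]_n) (x0 y0 : R) i j :
  rect_integral F x0 y0 i j = rect_contour_integral (fun z => F z i j) x0 y0.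
Proof.
by rewrite /rect_contour_integral /= !big_cons big_nil addr0 !mxE !addrA.
Qed.

Definition on_rect_boundary (x0 y0 : R) z : Prop :=
  [/\ - x0 <= Re z <= x0, - y0 <= Im z <= y0 &
      [\/ Re z = x0, Re z = - x0, Im z = y0 | Im z = - y0]].

Lemma rect_sides_on_boundary (x0 y0 t : R) s : 0 <= x0 -> 0 <= y0 ->
  s \in rect_sides x0 y0 -> 0 <= t <= 1 -> on_rect_boundary x0 y0 (segment s.1 s.2 t).
Proof.
move=> x0_ge0 y0_ge0 + /andP[t0 t1].
rewrite !inE => /or4P[] /eqP ->; rewrite /on_rect_boundary /segment /=;
  (split; [apply/andP; split; nra|apply/andP; split; nra|]).
- by apply: Or41; ring.
- by apply: Or43; ring.
- by apply: Or42; ring.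
- by apply: Or44; ring.
Qed.

Lemma on_rect_boundary_neq (x0 y0 : R) p z :
  ~ on_rect_boundary x0 y0 p -> on_rect_boundary x0 y0 z -> p != z.
Proof. by move=> pb zb; apply/eqP => pz; apply: pb; rewrite pz. Qed.

Lemma off_rect_boundary_segment (x0 y0 t : R) p s : 0 <= x0 -> 0 <= y0 ->
  ~ on_rect_boundary x0 y0 p -> s \in rect_sides x0 y0 -> 0 <= t <= 1 ->
  p != segment s.1 s.2 t.
Proof.
move=> x0_ge0 y0_ge0 pb sr t01; apply: on_rect_boundary_neq pb _.
exact: rect_sides_on_boundary.
Qed.

Lemma eq_rect_contour_integral f g (x0 y0 : R) : 0 <= x0 -> 0 <= y0 ->
  (forall z, on_rect_boundary x0 y0 z -> f z = g z) ->
  rect_contour_integral f x0 y0 = rect_contour_integral g x0 y0.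
Proof.
move=> x0_ge0 y0_ge0 fg; rewrite /rect_contour_integral !big_seq.
apply: eq_bigr => s sr; apply: eq_cintegral01 => t t01.
by rewrite fg //; exact: rect_sides_on_boundary.
Qed.

Lemma rect_contour_integral_simple_poles (I : Type) (r : seq I) (k p q : I -> C)
    (x0 y0 : R) : 0 <= x0 -> 0 <= y0 ->
  (forall i, ~ on_rect_boundary x0 y0 (p i)) ->
  (forall i, ~ on_rect_boundary x0 y0 (q i)) -> (forall i, p i != q i) ->
  rect_contour_integral (fun z => \sum_(i <- r) k i * ((p i - z)^-1 * (q i - z)^-1)) x0 y0 =
  \sum_(i <- r) k i / (q i - p i) *
    (rect_contour_integral (fun z => (p i - z)^-1) x0 y0 -
     rect_contour_integral (fun z => (q i - z)^-1) x0 y0).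
Proof.
move=> x0_ge0 y0_ge0 hp hq pq.
rewrite (eq_rect_contour_integral (g := fun z => \sum_(i <- r)
    k i / (q i - p i) * ((p i - z)^-1 - (q i - z)^-1))) //; last first.
  move=> z zb; apply: eq_bigr => i _.
  rewrite -mulrA -partial_fraction2 //.
  - exact: on_rect_boundary_neq (hp i) zb.
  - exact: on_rect_boundary_neq (hq i) zb.
have side s : s \in rect_sides x0 y0 -> line_integral (fun z => \sum_(i <- r)
      k i / (q i - p i) * ((p i - z)^-1 - (q i - z)^-1)) s.1 s.2 =
    \sum_(i <- r) k i / (q i - p i) * (line_integral (fun z => (p i - z)^-1) s.1 s.2 -
                                      line_integral (fun z => (q i - z)^-1) s.1 s.2).
  move=> sr; apply: line_integral_cauchy_diff_sum => i t t01.
    exact: off_rect_boundary_segment x0_ge0 y0_ge0 (hp i) sr t01.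
  exact: off_rect_boundary_segment x0_ge0 y0_ge0 (hq i) sr t01.
rewrite /rect_contour_integral big_seq (eq_bigr _ side) -big_seq exchange_big /=.
apply: eq_bigr => i _.
by rewrite -mulr_sumr -sumrB.
Qed.

Lemma complex_eta (w : C) : w = Complex (Re w) (Im w).
Proof. by case: w. Qed.

Lemma Re_rect_contour_integral_cauchy p (x0 y0 : R) : 0 <= x0 -> 0 <= y0 ->
  ~ on_rect_boundary x0 y0 p ->
  Re (rect_contour_integral (fun z => (p - z)^-1) x0 y0) = 0.
Proof.
move=> x0_ge0 y0_ge0 pb; rewrite /rect_contour_integral raddf_sum big_seq.
rewrite (eq_bigr (fun s => log_modulus (p - s.1) - log_modulus (p - s.2))).
  by rewrite -big_seq /= !big_cons big_nil; ring.
move=> s sr; apply: Re_line_integral_cauchy => t t01.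
exact: off_rect_boundary_segment x0_ge0 y0_ge0 pb sr t01.
Qed.

Lemma off_rect_boundary_Im p (x0 y0 : R) : y0 < `|Im p| -> ~ on_rect_boundary x0 y0 p.
Proof. by move=> hp [_ /andP[lo hi] _]; move: hp; rewrite ltNge ler_norml lo hi. Qed.

Lemma off_rect_boundary_real (l x0 y0 : R) : `|l| < x0 -> 0 < y0 ->
  ~ on_rect_boundary x0 y0 (Complex l 0).
Proof. by rewrite ltr_norml => /andP[lo hi] y0_gt0 [_ _ /= []] E; lra. Qed.

Lemma rect_contour_integral_cauchy_outside p (x0 y0 : R) : 0 <= x0 -> 0 <= y0 ->
  y0 < `|Im p| -> rect_contour_integral (fun z => (p - z)^-1) x0 y0 = 0.
Proof.
move=> x0_ge0 y0_ge0 hp.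
have hIm s t : s \in rect_sides x0 y0 -> 0 <= t <= 1 -> Im (p - segment s.1 s.2 t) != 0.
  move=> sr t01; have [_ /andP[lo hi] _] := rect_sides_on_boundary x0_ge0 y0_ge0 sr t01.
  rewrite (_ : Im (p - _) = Im p - Im (segment s.1 s.2 t)); last by case: (segment _ _ _); case: (p).
  by rewrite subr_eq0; apply/eqP => E; move: hp; rewrite E ltNge ler_norml lo hi.
rewrite [LHS]complex_eta Re_rect_contour_integral_cauchy //; last first.
  exact: off_rect_boundary_Im.
rewrite /rect_contour_integral raddf_sum big_seq.
rewrite (eq_bigr (fun s => atan (Re (p - s.2) / Im (p - s.2)) -
                           atan (Re (p - s.1) / Im (p - s.1)))).
  by rewrite -big_seq /= !big_cons big_nil; congr Complex; ring.
by move=> s sr; apply: Im_line_integral_cauchy_Im => t; exact: hIm.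
Qed.

Lemma rect_contour_integral_cauchy_real_inside (l x0 y0 : R) : `|l| < x0 -> 0 < y0 ->
  rect_contour_integral (fun z => (Complex l 0 - z)^-1) x0 y0 = Complex 0 (- (2 * pi)).
Proof.
move=> l_in y0_gt0; have /andP[lo hi] : - x0 < l < x0 by rewrite -ltr_norml.
have x0_gt0 : 0 < x0 by rewrite (le_lt_trans (normr_ge0 l)).
rewrite [LHS]complex_eta Re_rect_contour_integral_cauchy ?ltW //; last first.
  exact: off_rect_boundary_real.
congr Complex.
have ImD (w w' : C) : Im (w + w') = Im w + Im w' by case: w; case: w'.
rewrite /rect_contour_integral [rect_sides _ _]/= !big_cons big_nil addr0 !ImD.
rewrite Im_line_integral_cauchy_Re; last first.
  by move=> t /andP[t0 t1]; rewrite /segment /=; apply/eqP => E; lra.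
rewrite Im_line_integral_cauchy_Im; last first.
  by move=> t /andP[t0 t1]; rewrite /segment /=; apply/eqP => E; nra.
rewrite Im_line_integral_cauchy_Re; last first.
  by move=> t /andP[t0 t1]; rewrite /segment /=; apply/eqP => E; nra.
rewrite Im_line_integral_cauchy_Im; last first.
  by move=> t /andP[t0 t1]; rewrite /segment /=; apply/eqP => E; nra.
rewrite /=.
have xl : x0 - l != 0 by rewrite subr_eq0 gt_eqF.
have lx : l - x0 != 0 by rewrite subr_eq0 lt_eqF.
have xl' : x0 + l != 0 by rewrite gt_eqF //; lra.
have lx' : l - - x0 != 0 by rewrite opprK addrC.
have y0n : y0 != 0 by rewrite gt_eqF.
have a0 : 0 < y0 / (x0 - l) by rewrite divr_gt0 // subr_gt0.
have b0 : 0 < y0 / (x0 + l) by rewrite divr_gt0 //; lra.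
rewrite (_ : (0 - - y0) / (l - x0) = - (y0 / (x0 - l))); last by field; rewrite ?xl ?lx ?xl' ?lx' ?y0n.
rewrite (_ : (0 - y0) / (l - x0) = y0 / (x0 - l)); last by field; rewrite ?xl ?lx ?xl' ?lx' ?y0n.
rewrite (_ : (l - - x0) / (0 - y0) = - (y0 / (x0 + l))^-1); last by field; rewrite ?xl ?lx ?xl' ?lx' ?y0n.
rewrite (_ : (l - x0) / (0 - y0) = (y0 / (x0 - l))^-1); last by field; rewrite ?xl ?lx ?xl' ?lx' ?y0n.
rewrite (_ : (0 - y0) / (l - - x0) = - (y0 / (x0 + l))); last by field; rewrite ?xl ?lx ?xl' ?lx' ?y0n.
rewrite (_ : (0 - - y0) / (l - - x0) = y0 / (x0 + l)); last by field; rewrite ?xl ?lx ?xl' ?lx' ?y0n.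
rewrite (_ : (l - x0) / (0 - - y0) = - (y0 / (x0 - l))^-1); last by field; rewrite ?xl ?lx ?xl' ?lx' ?y0n.
rewrite (_ : (l - - x0) / (0 - - y0) = (y0 / (x0 + l))^-1); last by field; rewrite ?xl ?lx ?xl' ?lx' ?y0n.
rewrite !atanN !atanV //; lra.
Qed.

End RectangleContour.

Section SpectralCalculus.
Variables (R : realType) (n : nat).
Local Notation C := R[i].
Implicit Types (M : 'M[R]_n) (u : 'I_n -> 'cV[R]_n) (l : 'I_n -> R).

Definition orthonormal_family u := forall i j, (u i)^T *m u j = (i == j)%:R%:M.

Lemma cmx_sum (I : Type) (r : seq I) (F : I -> 'M[R]_n) :
  cmx (\sum_(i <- r) F i) = \sum_(i <- r) cmx (F i).
Proof.
apply/matrixP => i j; rewrite mxE !summxE; under [RHS]eq_bigr do rewrite mxE.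
exact: (rmorph_sum (real_complex R)).
Qed.

Lemma cmxM M N : cmx (M *m N) = cmx M *m cmx N.
Proof. exact: (map_mxM (real_complex R)). Qed.

Lemma cmx1 : cmx (1%:M : 'M[R]_n) = 1%:M.
Proof. exact: (map_mx1 (real_complex R)). Qed.

Lemma cmxZ (a : R) M : cmx (a *: M) = Complex a 0 *: cmx M.
Proof. exact: (map_mxZ (real_complex R)). Qed.

Lemma spnorm_set_has_ubound M :
  has_ubound [set vnorm2 (M *m x) | x in [set x : 'cV[R]_n | vnorm2 x = 1]].
Proof.
exists (Num.sqrt (\sum_(k < n) (\sum_(j < n) `|M k j|) ^+ 2)).
move=> _ [x x1 <-]; rewrite /vnorm2 ler_sqrt; last first.
  by apply: sumr_ge0 => k _; apply: sqr_ge0.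
have x_sum1 : \sum_(k < n) x k 0 ^+ 2 = 1.
  have s_ge0 : 0 <= \sum_(k < n) x k 0 ^+ 2 by apply: sumr_ge0 => k _; apply: sqr_ge0.
  by rewrite -(sqr_sqrtr s_ge0) -/(vnorm2 x) x1 expr1n.
have x_le1 j : `|x j 0| <= 1.
  have : x j 0 ^+ 2 <= 1.
    by rewrite -x_sum1 (bigD1 j) //= lerDl; apply: sumr_ge0 => k _; apply: sqr_ge0.
  by move=> h; rewrite ler_norml; apply/andP; split; nra.
apply: ler_sum => k _.
have Mx_le : `|(M *m x) k 0| <= \sum_(j < n) `|M k j|.
  rewrite mxE; apply: le_trans (ler_norm_sum _ _ _) _; apply: ler_sum => j _.
  by rewrite normrM ler_piMr.
have S_ge0 : 0 <= \sum_(j < n) `|M k j| by apply: sumr_ge0 => j _.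
by move: Mx_le; rewrite ler_norml => /andP[h1 h2]; nra.
Qed.

Section OrthonormalFamily.
Variable u : 'I_n -> 'cV[R]_n.
Hypothesis u_on : orthonormal_family u.

Lemma orthonormal_projM i j :
  u i *m (u i)^T *m (u j *m (u j)^T) = (i == j)%:R *: (u i *m (u i)^T).
Proof.
rewrite mulmxA -(mulmxA (u i)) u_on mul_mx_scalar -scalemxAl.
by case: eqP => [->|_]; rewrite ?scale1r // !scale0r.
Qed.

Lemma orthonormal_proj_sum : \sum_(i < n) u i *m (u i)^T = 1%:M.
Proof.
pose V : 'M[R]_n := \matrix_(k, i) u i k 0.
have VtV : V^T *m V = 1%:M.
  apply/matrixP => i j; rewrite -[RHS](_ : ((u i)^T *m u j) 0 0 = _); last first.
    by rewrite u_on !mxE eqxx mulr1n.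
  by rewrite !mxE; apply: eq_bigr => k _; rewrite !mxE.
apply/matrixP => k l; rewrite -(mulmx1C VtV) summxE !mxE.
by apply: eq_bigr => i _; rewrite !mxE big_ord1 !mxE.
Qed.

Section Decomposition.
Variables (M : 'M[R]_n) (l : 'I_n -> R).
Hypothesis M_spectral : M = \sum_(i < n) l i *: (u i *m (u i)^T).

Lemma spectral_eigenvector i : M *m u i = l i *: u i.
Proof.
rewrite M_spectral mulmx_suml (bigD1 i) //= big1 ?addr0.
  by rewrite -scalemxAl -mulmxA u_on eqxx mul_mx_scalar scale1r.
move=> k ki; rewrite -scalemxAl -mulmxA u_on (negbTE ki) mul_mx_scalar.
by rewrite scale0r scaler0.
Qed.

Lemma eigenvalue_le_spnorm i : `|l i| <= spnorm M.
Proof.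
have ui_sum1 : \sum_(k < n) u i k 0 ^+ 2 = 1.
  transitivity (((u i)^T *m u i) 0 0); last by rewrite u_on !mxE eqxx mulr1n.
  by rewrite !mxE; apply: eq_bigr => k _; rewrite !mxE expr2.
have -> : `|l i| = vnorm2 (M *m u i).
  rewrite spectral_eigenvector /vnorm2; under eq_bigr do rewrite mxE exprMn.
  by rewrite -mulr_sumr ui_sum1 mulr1 sqrtr_sqr.
apply: ub_le_sup; first exact: spnorm_set_has_ubound.
by exists (u i) => //=; rewrite /vnorm2 ui_sum1 sqrtr1.
Qed.

Lemma resolvent_spectral z : (forall i, Complex (l i) 0 - z != 0) ->
  resolvent M z = \sum_(i < n) (Complex (l i) 0 - z)^-1 *: cmx (u i *m (u i)^T).
Proof.
move=> lz; set Q := fun i => cmx (u i *m (u i)^T).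
have QM i j : Q i *m Q j = (i == j)%:R *: Q i.
  by rewrite /Q -cmxM orthonormal_projM // cmxZ; congr (_ *: _); case: (i == j).
have Q_sum : \sum_i Q i = 1%:M by rewrite /Q -cmx_sum orthonormal_proj_sum // cmx1.
have Mz : cmx M - z%:M = \sum_i (Complex (l i) 0 - z) *: Q i.
  rewrite M_spectral cmx_sum -[z%:M]scalemx1 -Q_sum scaler_sumr -sumrB.
  by apply: eq_bigr => i _; rewrite scalerBl cmxZ.
set N := \sum_i _.
have MzN : (cmx M - z%:M) *m N = 1%:M.
  rewrite Mz /N mulmx_suml -Q_sum; apply: eq_bigr => i _.
  rewrite mulmx_sumr (bigD1 i) //= big1 ?addr0.
    by rewrite -scalemxAl -scalemxAr QM eqxx scale1r scalerA mulfV // scale1r.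
  move=> j ji; rewrite -scalemxAl -scalemxAr QM eq_sym (negbTE ji).
  by rewrite scale0r !scaler0.
have [Mz_unit _] := mulmx1_unit MzN.
by rewrite /resolvent -[invmx _]mulmx1 -MzN mulmxA mulVmx // mul1mx.
Qed.

End Decomposition.

End OrthonormalFamily.

Lemma resolvent_sandwich (A B M : 'M[R]_n) (l m : 'I_n -> R)
    (v w : 'I_n -> 'cV[R]_n) (z1 z2 : C) :
  orthonormal_family v -> orthonormal_family w ->
  A = \sum_(i < n) l i *: (v i *m (v i)^T) ->
  B = \sum_(j < n) m j *: (w j *m (w j)^T) ->
  (forall i, Complex (l i) 0 - z1 != 0) -> (forall j, Complex (m j) 0 - z2 != 0) ->
  resolvent A z1 *m cmx M *m resolvent B z2 =
  \sum_(i < n) \sum_(j < n) ((Complex (l i) 0 - z1)^-1 * (Complex (m j) 0 - z2)^-1) *: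
    cmx (v i *m (v i)^T *m M *m w j *m (w j)^T).
Proof.
move=> hv hw hA hB hz1 hz2.
rewrite (resolvent_spectral hv hA hz1) (resolvent_spectral hw hB hz2) !mulmx_suml.
apply: eq_bigr => i _; rewrite mulmx_sumr; apply: eq_bigr => j _.
by rewrite -scalemxAl -scalemxAr -scalemxAl scalerA mulrC -!cmxM !mulmxA.
Qed.

Lemma resolvent_shifted_product_entry (A B M : 'M[R]_n) (l m : 'I_n -> R)
    (v w : 'I_n -> 'cV[R]_n) (eta : R) (z : C) r c :
  orthonormal_family v -> orthonormal_family w ->
  A = \sum_(i < n) l i *: (v i *m (v i)^T) ->
  B = \sum_(j < n) m j *: (w j *m (w j)^T) ->
  (forall i, Complex (l i) 0 != z) -> (forall j, Complex (m j) (- eta) != z) ->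
  (resolvent A z *m cmx M *m resolvent B (z + Complex 0 eta)) r c =
  \sum_(p : 'I_n * 'I_n) Complex ((v p.1 *m (v p.1)^T *m M *m w p.2 *m (w p.2)^T) r c) 0 *
    ((Complex (l p.1) 0 - z)^-1 * (Complex (m p.2) (- eta) - z)^-1).
Proof.
move=> hv hw hA hB lz mz.
have shift j : Complex (m j) 0 - (z + Complex 0 eta) = Complex (m j) (- eta) - z.
  by case: z {lz mz} => x y /=; congr Complex; ring.
have lz' i : Complex (l i) 0 - z != 0 by rewrite subr_eq0.
have mz' j : Complex (m j) 0 - (z + Complex 0 eta) != 0 by rewrite shift subr_eq0.
rewrite (resolvent_sandwich _ hv hw hA hB lz' mz') pair_big summxE /=.
apply: eq_bigr => p _.
by rewrite !mxE shift mulrC.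
Qed.

End SpectralCalculus.

Lemma lorentzian_residue (R : realType) (K l m eta c : R) : eta != 0 -> c != 0 ->
  c^-1 * complex.Re (Complex K 0 / (Complex m (- eta) - Complex l 0) *
                     (Complex 0 (- c) - 0)) =
  eta / ((l - m) ^+ 2 + eta ^+ 2) * K.
Proof.
move=> eta0 c0; rewrite subr0 /=.
have -> : (m - l) ^+ 2 + (- eta - 0) ^+ 2 = (l - m) ^+ 2 + eta ^+ 2 by ring.
have D0 : (l - m) ^+ 2 + eta ^+ 2 != 0.
  by rewrite gt_eqF // ltr_wpDl ?sqr_ge0 // exprn_even_gt0.
by field; rewrite D0.
Qed.

Unset Implicit Arguments.

Theorem proposition3p2 (R : realType) (n : nat) (A B : 'M[R]_n)
  (lam mu : 'I_n -> R) (v w : 'I_n -> 'cV[R]_n) (eta : R) :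
  A^T = A -> B^T = B ->
  (forall i j, (v i)^T *m v j = (i == j)%:R%:M) ->
  (forall i j, (w i)^T *m w j = (i == j)%:R%:M) ->
  A = \sum_(i < n) lam i *: (v i *m (v i)^T) ->
  B = \sum_(j < n) mu j *: (w j *m (w j)^T) ->
  spnorm A <= 5 / 2 ->
  0 < eta ->
  \sum_(i < n) \sum_(j < n)
     (eta / ((lam i - mu j) ^+ 2 + eta ^+ 2)) *:
       (v i *m (v i)^T *m onesmx R n *m w j *m (w j)^T)
  = (2 * pi)^-1 *:
      map_mx (@complex.Re R)
        (rect_integral
           (fun z => resolvent A z *m cmx (onesmx R n)
                       *m resolvent B (z + Complex 0 eta))
           3 (eta / 2)).
Proof.
have lt3 : 5 / 2 < 3 :> R by lra.
(* The symmetry hypotheses follow from the spectral decompositions. *)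
move=> _ _ hv hw hA hB A_le eta_gt0.
have eta2_gt0 : 0 < eta / 2 by rewrite divr_gt0.
have lam_in i : `|lam i| < 3.
  exact: le_lt_trans (eigenvalue_le_spnorm hv hA i) (le_lt_trans A_le lt3).
have mu_out j : eta / 2 < `|complex.Im (Complex (mu j) (- eta))|.
  by rewrite /= normrN gtr0_norm // ltr_pdivrMr // ltr_pMr // ltr1n.
have lam_off i := off_rect_boundary_real (lam_in i) eta2_gt0.
have mu_off j := off_rect_boundary_Im (x0 := 3) (mu_out j).
rewrite pair_big /=; apply/matrixP => r c.
rewrite summxE [RHS]mxE [X in _ * X]mxE rect_integral_entry.
rewrite (eq_rect_contour_integral (ler0n _ 3) (ltW eta2_gt0) (fun z zb =>
  resolvent_shifted_product_entry _ r c hv hw hA hB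
    (fun i => on_rect_boundary_neq (lam_off i) zb)
    (fun j => on_rect_boundary_neq (mu_off j) zb))).
rewrite rect_contour_integral_simple_poles ?ler0n ?ltW // => [|p].
  rewrite raddf_sum mulr_sumr; apply: eq_bigr => p _.
  rewrite rect_contour_integral_cauchy_real_inside //.
  rewrite rect_contour_integral_cauchy_outside ?ler0n ?ltW //.
  by rewrite mxE lorentzian_residue ?gt_eqF ?mulr_gt0 ?pi_gt0.
by apply/eqP; case=> _ /esym/eqP; rewrite oppr_eq0 gt_eqF.
Qed.
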